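(* Let $\boldsymbol\pi\in\Delta^{d-1}$ and $1\le k\le d-1$. Then $$\min_{\mathbf X\in\mathcal D_k}H(\mathbf X\boldsymbol\pi)=H(\boldsymbol\pi^{(k)}).$$
   Context: $H(\mathbf x)=-\sum_r x_r\log x_r$ (with $0\log0=0$). $\mathcal D_k$ is the set of matrices $\mathbf X\in\{0,1\}^{k\times d}$ in which every column has exactly one nonzero entry and every row has at least one nonzero entry. With $\pi_{[1]}\ge\pi_{[2]}\ge\dots\ge\pi_{[d]}$ the entries of $\boldsymbol\pi$ in decreasing order, $\boldsymbol\pi^{(k)}\in\Delta^{k-1}$ is defined by $\pi^{(k)}_1=\sum_{r=1}^{d-k+1}\pi_{[r]}$ and $\pi^{(k)}_l=\pi_{[d-k+l]}$ for $2\le l\le k$ (if $k\ge2$). *)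

From Stdlib Require Import Reals List.
Import ListNotations.
Open Scope R_scope.

Definition xlogx (x : R) : R := if Req_EM_T x 0 then 0 else x * ln x.

Definition entropy (x : list R) : R := - fold_right Rplus 0 (map xlogx x).

Definition lsum (x : list R) : R := fold_right Rplus 0 x.

Fixpoint insert_desc (a : R) (l : list R) : list R :=
  match l with
  | [] => [a]
  | b :: t => if Rle_dec b a then a :: b :: t else b :: insert_desc a t
  end.

Fixpoint sort_desc (l : list R) : list R :=
  match l with
  | [] => []
  | a :: t => insert_desc a (sort_desc t)
  end.

Definition in_simplex (d : nat) (p : list R) : Prop :=
  length p = d /\ Forall (fun x => 0 <= x) p /\ lsum p = 1.

Definition in_Dk (k d : nat) (X : nat -> nat -> R) : Prop :=
  (forall r j, (r < k)%nat -> (j < d)%nat -> X r j = 0 \/ X r j = 1) /\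
  (forall j, (j < d)%nat ->
     exists r, (r < k)%nat /\ X r j <> 0 /\
       forall r', (r' < k)%nat -> r' <> r -> X r' j = 0) /\
  (forall r, (r < k)%nat -> exists j, (j < d)%nat /\ X r j <> 0).

Definition matvec (k d : nat) (X : nat -> nat -> R) (p : list R) : list R :=
  map (fun r => lsum (map (fun j => X r j * nth j p 0) (seq 0 d))) (seq 0 k).

Definition pi_k (k : nat) (p : list R) : list R :=
  let s := sort_desc p in
  let m := (length p - k + 1)%nat in
  lsum (firstn m s) :: skipn m s.

(* A matrix of D_k is the indicator matrix of a map from the d coordinates onto k
   blocks, and -H(X pi) is the sum of f(block sum), f(x) = x ln x.  Since f is convex,
   its increments f(w + x) - f(w) increase with w.  Running through the coordinates in
   increasing order, the smallest one either forms a block by itself, or it joins a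
   block whose sum is at most that of the d - k largest remaining coordinates; in the
   latter case moving it into that lumped block and releasing the next smallest
   coordinate as a singleton does not decrease -H.  Hence lumping the d - k + 1 largest
   coordinates and keeping the other k - 1 as singletons maximises -H, and this
   configuration is itself a matrix of D_k. *)

From Stdlib Require Import Reals List Sorting Permutation Lia Lra.
Import ListNotations.
Open Scope R_scope.

Lemma xlogx_0 : xlogx 0 = 0.
Proof. unfold xlogx; destruct (Req_EM_T 0 0); [reflexivity | lra]. Qed.

Lemma xlogx_pos x : 0 < x -> xlogx x = x * ln x.
Proof. intros Hx; unfold xlogx; destruct (Req_EM_T x 0); [lra | reflexivity]. Qed.

Lemma ln_le_sub1 y : 0 < y -> ln y <= y - 1.
Proof. intros Hy; pose proof (exp_ineq1_le (ln y)) as E; rewrite exp_ln in E; lra. Qed.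

Lemma xlogx_tangent a b : 0 < a -> 0 <= b ->
  (b - a) * (1 + ln a) <= xlogx b - xlogx a.
Proof.
  intros Ha Hb; rewrite (xlogx_pos a) by exact Ha.
  destruct (Req_dec b 0) as [-> | Hb0]; [rewrite xlogx_0; lra |].
  rewrite xlogx_pos by lra.
  assert (Hab : 0 < a / b) by (apply Rdiv_lt_0_compat; lra).
  assert (Eln : ln a = ln b + ln (a / b)).
  { rewrite <- ln_mult by lra; f_equal; field; lra. }
  assert (b * ln (a / b) <= a - b).
  { apply Rle_trans with (b * (a / b - 1)).
    - apply Rmult_le_compat_l; [lra | apply ln_le_sub1, Hab].
    - right; field; lra. }
  rewrite Eln; nra.
Qed.

(* Tangents at [w + t] and [w + s], together with [ln (w + s) <= ln (w + t)]. *)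
Lemma xlogx_supermodular w s t : 0 <= w -> 0 <= s <= t ->
  xlogx (w + s) + xlogx (w + t) <= xlogx w + xlogx (w + s + t).
Proof.
  intros Hw Hst.
  destruct (Req_dec s 0) as [-> | Hs0]; [rewrite !Rplus_0_r; lra |].
  pose proof (xlogx_tangent (w + t) (w + s + t) ltac:(lra) ltac:(lra)).
  pose proof (xlogx_tangent (w + s) w ltac:(lra) ltac:(lra)).
  assert (ln (w + s) <= ln (w + t)).
  { destruct (Req_dec s t) as [-> | Hst']; [lra |].
    left; apply ln_increasing; lra. }
  nra.
Qed.

Lemma xlogx_increment_mono w U x : 0 <= w -> w <= U -> 0 <= x ->
  xlogx (w + x) + xlogx U <= xlogx w + xlogx (U + x).
Proof.
  intros Hw HwU Hx.
  replace U with (w + (U - w)) by ring.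
  replace (w + (U - w) + x) with (w + x + (U - w)) by ring.
  destruct (Rle_dec x (U - w)).
  - apply xlogx_supermodular; lra.
  - replace (w + x + (U - w)) with (w + (U - w) + x) by ring.
    rewrite Rplus_comm; apply xlogx_supermodular; lra.
Qed.

Lemma lsum_cons x l : lsum (x :: l) = x + lsum l.
Proof. reflexivity. Qed.

Lemma lsum_app a b : lsum (a ++ b) = lsum a + lsum b.
Proof. induction a as [|x a IH]; cbn [app]; rewrite ?lsum_cons, ?IH; cbn; lra. Qed.

Lemma lsum_perm a b : Permutation a b -> lsum a = lsum b.
Proof. induction 1; rewrite ?lsum_cons; lra. Qed.

Lemma lsum_rev l : lsum (rev l) = lsum l.
Proof. apply lsum_perm, Permutation_sym, Permutation_rev. Qed.

Lemma lsum_nonneg l : Forall (Rle 0) l -> 0 <= lsum l.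
Proof. induction 1; rewrite ?lsum_cons; cbn; lra. Qed.

Lemma lsum_map_update {A} (F G : A -> R) (a : A) (l : list A) :
  NoDup l -> In a l -> (forall b, b <> a -> F b = G b) ->
  lsum (map F l) = lsum (map G l) + (F a - G a).
Proof.
  intros Hnd Ha HFG; induction Hnd as [|b l Hb Hnd IH]; [destruct Ha |]; cbn [map].
  rewrite !lsum_cons.
  destruct Ha as [<- | Ha].
  - rewrite (map_ext_in F G l); [lra |].
    intros c Hc; apply HFG; intros ->; contradiction.
  - rewrite IH, HFG by (auto; intros ->; contradiction); lra.
Qed.

Lemma map_fst_combine {A B} (a : list A) (b : list B) :
  length a = length b -> map fst (combine a b) = a.
Proof.
  revert b; induction a as [|x a IH]; intros [|y b] Hab; cbn in *; try lia; auto.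
  rewrite IH by lia; reflexivity.
Qed.

Lemma map_snd_combine {A B} (a : list A) (b : list B) :
  length a = length b -> map snd (combine a b) = b.
Proof.
  revert b; induction a as [|x a IH]; intros [|y b] Hab; cbn in *; try lia; auto.
  rewrite IH by lia; reflexivity.
Qed.

(** A vector whose coordinates are tagged with the block (row of [X]) they are lumped
    into; [lump_xlogx L] is [- H] of the lumped vector. *)
Definition block_sum (r : nat) (L : list (nat * R)) : R :=
  lsum (map (fun a => if Nat.eqb (fst a) r then snd a else 0) L).

Definition labels (L : list (nat * R)) : list nat := nodup Nat.eq_dec (map fst L).

Definition lump_xlogx (L : list (nat * R)) : R :=
  lsum (map (fun r => xlogx (block_sum r L)) (labels L)).

Lemma block_sum_cons r l x L :
  block_sum r ((l, x) :: L) = (if Nat.eqb l r then x else 0) + block_sum r L.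
Proof. reflexivity. Qed.

Lemma block_sum_notin r L : ~ In r (map fst L) -> block_sum r L = 0.
Proof.
  induction L as [|[l x] L IH]; intros Hr; [reflexivity |].
  rewrite block_sum_cons; cbn in Hr.
  destruct (Nat.eqb_spec l r); [tauto | rewrite IH; [lra | tauto]].
Qed.

Lemma block_sum_perm r L L' : Permutation L L' -> block_sum r L = block_sum r L'.
Proof. intros; apply lsum_perm, Permutation_map; assumption. Qed.

Lemma block_sum_nonneg r L : Forall (Rle 0) (map snd L) -> 0 <= block_sum r L.
Proof.
  induction L as [|[l x] L IH]; intros HL; [cbn; lra |].
  inversion HL; subst; rewrite block_sum_cons.
  specialize (IH ltac:(assumption)); destruct (Nat.eqb l r); lra.
Qed.

Lemma labels_perm L L' : Permutation L L' -> Permutation (labels L) (labels L').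
Proof.
  intros HL; apply NoDup_Permutation; try apply NoDup_nodup.
  intros r; unfold labels; rewrite !nodup_In.
  split; apply Permutation_in; [| apply Permutation_sym]; apply Permutation_map, HL.
Qed.

Lemma lump_xlogx_perm L L' : Permutation L L' -> lump_xlogx L = lump_xlogx L'.
Proof.
  intros HL; unfold lump_xlogx.
  rewrite (lsum_perm _ _ (Permutation_map _ (labels_perm _ _ HL))).
  f_equal; apply map_ext; intros r; rewrite (block_sum_perm r _ _ HL); reflexivity.
Qed.

Lemma labels_length_le L : (length (labels L) <= length L)%nat.
Proof.
  rewrite <- (length_map fst L); apply NoDup_incl_length; [apply NoDup_nodup |].
  intros r; apply nodup_In.
Qed.

Lemma labels_nil L : labels L = [] -> L = [].
Proof.
  destruct L as [|a L]; [reflexivity |]; intros HL.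
  assert (H : In (fst a) (labels (a :: L))) by (apply nodup_In; left; reflexivity).
  rewrite HL in H; destruct H.
Qed.

Lemma labels_cons_fresh l x L : ~ In l (map fst L) -> labels ((l, x) :: L) = l :: labels L.
Proof. intros Hl; unfold labels; cbn; destruct (in_dec _ l _); [contradiction | reflexivity]. Qed.

Lemma labels_cons_old l x L : In l (map fst L) -> labels ((l, x) :: L) = labels L.
Proof. intros Hl; unfold labels; cbn; destruct (in_dec _ l _); [reflexivity | contradiction]. Qed.

Lemma lump_xlogx_cons_fresh l x L : ~ In l (map fst L) ->
  lump_xlogx ((l, x) :: L) = xlogx x + lump_xlogx L.
Proof.
  intros Hl; unfold lump_xlogx; rewrite labels_cons_fresh by exact Hl.
  cbn [map]; rewrite lsum_cons, block_sum_cons.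
  rewrite Nat.eqb_refl, (block_sum_notin l L Hl), Rplus_0_r; do 2 f_equal.
  apply map_ext_in; intros r Hr; rewrite block_sum_cons.
  destruct (Nat.eqb_spec l r) as [-> | _]; [| f_equal; lra].
  exfalso; apply Hl, (nodup_In Nat.eq_dec), Hr.
Qed.

Lemma lump_xlogx_cons_old l x L : In l (map fst L) ->
  lump_xlogx ((l, x) :: L)
  = lump_xlogx L + (xlogx (block_sum l L + x) - xlogx (block_sum l L)).
Proof.
  intros Hl; unfold lump_xlogx; rewrite labels_cons_old by exact Hl.
  rewrite (lsum_map_update _ (fun r => xlogx (block_sum r L)) l);
    [| apply NoDup_nodup | apply nodup_In, Hl |].
  - rewrite block_sum_cons, Nat.eqb_refl, (Rplus_comm x); reflexivity.
  - intros r Hr; rewrite block_sum_cons.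
    destruct (Nat.eqb_spec l r); [congruence | f_equal; lra].
Qed.

Lemma block_sum_block_app l ys T : ~ In l (map fst T) ->
  block_sum l (map (pair l) ys ++ T) = lsum ys.
Proof.
  intros HT; induction ys as [|y ys IH]; cbn [map app].
  - apply block_sum_notin, HT.
  - rewrite block_sum_cons, Nat.eqb_refl, IH; reflexivity.
Qed.

Lemma lump_xlogx_block_app l ys T : ys <> [] -> ~ In l (map fst T) ->
  lump_xlogx (map (pair l) ys ++ T) = xlogx (lsum ys) + lump_xlogx T.
Proof.
  intros Hys HT; induction ys as [|y ys IH]; [contradiction |]; cbn [map app].
  destruct ys as [|y' ys].
  - rewrite lump_xlogx_cons_fresh by exact HT; cbn; rewrite Rplus_0_r; reflexivity.
  - assert (Hin : In l (map fst (map (pair l) (y' :: ys) ++ T))) by (left; reflexivity).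
    rewrite (lump_xlogx_cons_old _ _ _ Hin), IH, block_sum_block_app
      by (discriminate || exact HT).
    rewrite (lsum_cons y), (Rplus_comm y); lra.
Qed.

Lemma lump_xlogx_combine ls vs : NoDup ls -> length ls = length vs ->
  lump_xlogx (combine ls vs) = lsum (map xlogx vs).
Proof.
  revert vs; induction ls as [|l ls IH]; intros [|v vs] Hls Hlen; cbn in Hlen; try lia.
  - reflexivity.
  - inversion Hls as [|? ? Hl Hls']; subst; cbn [combine map].
    rewrite lump_xlogx_cons_fresh, IH, lsum_cons by (rewrite ?map_fst_combine; auto).
    reflexivity.
Qed.

Lemma skipn_nth_cons {A} (l : list A) n d : (n < length l)%nat ->
  skipn n l = nth n l d :: skipn (S n) l.
Proof.
  revert n; induction l as [|a l IH]; intros [|n] Hn; cbn in Hn |- *; try lia; auto.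
  apply IH; lia.
Qed.

Lemma firstn_nth_snoc {A} (l : list A) n d : (n < length l)%nat ->
  firstn (S n) l = firstn n l ++ [nth n l d].
Proof.
  revert n; induction l as [|a l IH]; intros [|n] Hn; cbn in Hn |- *; try lia; auto.
  rewrite <- IH by lia; reflexivity.
Qed.

Lemma lsum_skipn_nonneg l n : Forall (Rle 0) l -> 0 <= lsum (skipn n l).
Proof.
  intros Hl; rewrite <- (firstn_skipn n l) in Hl.
  apply lsum_nonneg, (proj2 (proj1 (Forall_app _ _ _) Hl)).
Qed.

Lemma lsum_skipn_ge_head x l m : (m <= length l)%nat -> Forall (Rle x) l ->
  x + lsum (skipn m l) <= lsum (skipn m (x :: l)).
Proof.
  intros Hm Hx; destruct m as [|m]; [cbn [skipn]; rewrite lsum_cons; lra |].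
  change (skipn (S m) (x :: l)) with (skipn m l).
  rewrite (skipn_nth_cons l m 0), lsum_cons by lia.
  assert (x <= nth m l 0) by (rewrite Forall_forall in Hx; apply Hx, nth_In; lia).
  lra.
Qed.

Definition merge_xlogx (m : nat) (l : list R) : R :=
  xlogx (lsum (skipn m l)) + lsum (map xlogx (firstn m l)).

Lemma merge_xlogx_cons m x l : merge_xlogx (S m) (x :: l) = xlogx x + merge_xlogx m l.
Proof. unfold merge_xlogx; cbn [skipn firstn map]; rewrite lsum_cons; lra. Qed.

(* Adding [x] to a block of sum [w] gains at most as much as adding it to the lumped
   block, which in turn gains at most as much as lumping the next singleton [b >= x]
   and making [x] a singleton. *)
Lemma merge_xlogx_absorb w x l m :
  0 <= w -> w <= lsum (skipn m l) -> 0 <= x -> Forall (Rle x) l -> Forall (Rle 0) l ->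
  (m < length l)%nat ->
  xlogx (w + x) - xlogx w + merge_xlogx m l <= merge_xlogx m (x :: l).
Proof.
  intros Hw HwU Hx Hxl Hl Hm; destruct m as [|m].
  - unfold merge_xlogx; cbn [skipn firstn map]; rewrite lsum_cons.
    pose proof (xlogx_increment_mono w (lsum l) x Hw HwU Hx); rewrite (Rplus_comm x); lra.
  - rewrite merge_xlogx_cons; unfold merge_xlogx in *.
    rewrite (skipn_nth_cons l m 0), (firstn_nth_snoc l m 0), map_app, lsum_app, lsum_cons
      by lia.
    set (b := nth m l 0); set (U := lsum (skipn (S m) l)) in *.
    assert (x <= b) by (rewrite Forall_forall in Hxl; apply Hxl, nth_In; lia).
    assert (0 <= U) by apply lsum_skipn_nonneg, Hl.
    pose proof (xlogx_increment_mono w U x Hw HwU Hx).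
    pose proof (xlogx_increment_mono x b U Hx ltac:(assumption) ltac:(assumption)).
    cbn [map]; rewrite lsum_cons; change (lsum []) with 0.
    rewrite (Rplus_comm U x) in *; lra.
Qed.

(* Each of the other [m] blocks holds a coordinate of its own, so a block sum is at
   most the sum of the largest [length L - m] coordinates. *)
Lemma block_sum_le_merged L m r :
  Forall (Rle 0) (map snd L) -> StronglySorted Rle (map snd L) ->
  length (labels L) = S m -> block_sum r L <= lsum (skipn m (map snd L)).
Proof.
  revert m; induction L as [|[l x] L IH]; intros m Hnn Hsort Hlen; [discriminate |].
  cbn [map snd] in Hnn, Hsort |- *.
  inversion Hnn as [|? ? Hx Hnn']; inversion Hsort as [|? ? Hsort' Hmin]; subst.
  pose proof (labels_length_le L) as HlL.
  rewrite block_sum_cons.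
  destruct (in_dec Nat.eq_dec l (map fst L)) as [Hold | Hfresh].
  - rewrite labels_cons_old in Hlen by exact Hold.
    pose proof (IH m Hnn' Hsort' Hlen).
    pose proof (lsum_skipn_ge_head x (map snd L) m ltac:(rewrite length_map; lia) Hmin).
    destruct (Nat.eqb l r); lra.
  - rewrite labels_cons_fresh in Hlen by exact Hfresh; injection Hlen as Hlen.
    destruct (Nat.eqb_spec l r) as [<- | _].
    + rewrite block_sum_notin by exact Hfresh.
      pose proof (lsum_skipn_ge_head x (map snd L) m ltac:(rewrite length_map; lia) Hmin).
      pose proof (lsum_skipn_nonneg (map snd L) m Hnn'); lra.
    + destruct m as [|m].
      * rewrite (labels_nil L) by (apply length_zero_iff_nil, Hlen); cbn; lra.
      * rewrite Rplus_0_l; apply IH; assumption.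
Qed.

Lemma lump_xlogx_le_merged L m :
  Forall (Rle 0) (map snd L) -> StronglySorted Rle (map snd L) ->
  length (labels L) = S m -> lump_xlogx L <= merge_xlogx m (map snd L).
Proof.
  revert m; induction L as [|[l x] L IH]; intros m Hnn Hsort Hlen; [discriminate |].
  cbn [map snd] in Hnn, Hsort |- *.
  inversion Hnn as [|? ? Hx Hnn']; inversion Hsort as [|? ? Hsort' Hmin]; subst.
  pose proof (labels_length_le L) as HlL.
  destruct (in_dec Nat.eq_dec l (map fst L)) as [Hold | Hfresh].
  - rewrite labels_cons_old in Hlen by exact Hold.
    rewrite lump_xlogx_cons_old by exact Hold.
    pose proof (IH m Hnn' Hsort' Hlen).
    pose proof (block_sum_le_merged L m l Hnn' Hsort' Hlen).
    pose proof (merge_xlogx_absorb (block_sum l L) x (map snd L) m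
                  (block_sum_nonneg l L Hnn') ltac:(assumption) Hx Hmin Hnn'
                  ltac:(rewrite length_map; lia)).
    lra.
  - rewrite labels_cons_fresh in Hlen by exact Hfresh; injection Hlen as Hlen.
    rewrite lump_xlogx_cons_fresh by exact Hfresh.
    destruct m as [|m].
    + rewrite (labels_nil L) by (apply length_zero_iff_nil, Hlen).
      unfold lump_xlogx, merge_xlogx; cbn; rewrite !Rplus_0_r; lra.
    + rewrite merge_xlogx_cons; pose proof (IH m Hnn' Hsort' Hlen); lra.
Qed.

Lemma insert_desc_perm a l : Permutation (a :: l) (insert_desc a l).
Proof.
  induction l as [|b l IH]; cbn; [reflexivity |]; destruct (Rle_dec b a); [reflexivity |].
  etransitivity; [apply perm_swap | constructor; exact IH].
Qed.

Lemma sort_desc_perm l : Permutation l (sort_desc l).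
Proof.
  induction l as [|a l IH]; cbn; [reflexivity |].
  etransitivity; [constructor; exact IH | apply insert_desc_perm].
Qed.

Lemma insert_desc_sorted a l :
  StronglySorted (fun x y => y <= x) l -> StronglySorted (fun x y => y <= x) (insert_desc a l).
Proof.
  induction l as [|b l IH]; intros Hl; cbn; [repeat constructor |].
  inversion Hl as [|? ? Hl' Hb]; subst; rewrite Forall_forall in Hb.
  destruct (Rle_dec b a).
  - constructor; [exact Hl |]; constructor; [lra |].
    rewrite Forall_forall; intros y Hy; specialize (Hb y Hy); lra.
  - constructor; [apply IH, Hl' |]; rewrite Forall_forall; intros y Hy.
    apply (Permutation_in _ (Permutation_sym (insert_desc_perm a l))) in Hy.
    destruct Hy as [<- | Hy]; [lra | apply Hb, Hy].
Qed.

Lemma sort_desc_sorted l : StronglySorted (fun x y => y <= x) (sort_desc l).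
Proof. induction l; cbn; [constructor | apply insert_desc_sorted; assumption]. Qed.

Lemma StronglySorted_snoc {A} (Rel : A -> A -> Prop) l a :
  StronglySorted Rel l -> Forall (fun y => Rel y a) l -> StronglySorted Rel (l ++ [a]).
Proof.
  induction l as [|b l IH]; intros Hl Ha; cbn; [repeat constructor |].
  inversion Hl; inversion Ha; subst.
  constructor; [apply IH; assumption | apply Forall_app; split; auto].
Qed.

Lemma StronglySorted_rev {A} (Rel : A -> A -> Prop) l :
  StronglySorted Rel l -> StronglySorted (fun x y => Rel y x) (rev l).
Proof.
  induction l as [|a l IH]; intros Hl; cbn; [constructor |].
  inversion Hl as [|? ? Hl' Ha]; subst; apply StronglySorted_snoc; [apply IH, Hl' |].
  rewrite Forall_forall in *; intros y Hy; apply Ha, in_rev, Hy.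
Qed.

Fixpoint insert_desc_snd {A} (a : A * R) (l : list (A * R)) : list (A * R) :=
  match l with
  | [] => [a]
  | b :: t => if Rle_dec (snd b) (snd a) then a :: b :: t else b :: insert_desc_snd a t
  end.

Fixpoint sort_desc_snd {A} (l : list (A * R)) : list (A * R) :=
  match l with
  | [] => []
  | a :: t => insert_desc_snd a (sort_desc_snd t)
  end.

Lemma map_snd_insert_desc_snd {A} (a : A * R) l :
  map snd (insert_desc_snd a l) = insert_desc (snd a) (map snd l).
Proof.
  induction l as [|b l IH]; cbn; [reflexivity |].
  destruct (Rle_dec (snd b) (snd a)); cbn; [reflexivity | rewrite IH; reflexivity].
Qed.

Lemma map_snd_sort_desc_snd {A} (l : list (A * R)) :
  map snd (sort_desc_snd l) = sort_desc (map snd l).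
Proof.
  induction l as [|a l IH]; cbn; [reflexivity |].
  rewrite map_snd_insert_desc_snd, IH; reflexivity.
Qed.

Lemma insert_desc_snd_perm {A} (a : A * R) l : Permutation (a :: l) (insert_desc_snd a l).
Proof.
  induction l as [|b l IH]; cbn; [reflexivity |]; destruct (Rle_dec (snd b) (snd a));
    [reflexivity |].
  etransitivity; [apply perm_swap | constructor; exact IH].
Qed.

Lemma sort_desc_snd_perm {A} (l : list (A * R)) : Permutation l (sort_desc_snd l).
Proof.
  induction l as [|a l IH]; cbn; [reflexivity |].
  etransitivity; [constructor; exact IH | apply insert_desc_snd_perm].
Qed.

Lemma nat_finite_choice (P : nat -> nat -> Prop) d :
  (forall j, (j < d)%nat -> exists r, P j r) ->
  exists g : nat -> nat, forall j, (j < d)%nat -> P j (g j).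
Proof.
  induction d as [|d IH]; intros HP; [exists (fun _ => 0%nat); intros; lia |].
  destruct IH as [g Hg]; [intros j Hj; apply HP; lia |].
  destruct (HP d ltac:(lia)) as [r Hr].
  exists (fun j => if Nat.eqb j d then r else g j); intros j Hj.
  destruct (Nat.eqb_spec j d) as [-> | Hjd]; [exact Hr | apply Hg; lia].
Qed.

Definition onto_rows (k d : nat) (g : nat -> nat) : Prop :=
  (forall j, (j < d)%nat -> (g j < k)%nat) /\
  (forall r, (r < k)%nat -> exists j, (j < d)%nat /\ g j = r).

Definition indicator_mx (g : nat -> nat) (r j : nat) : R := if Nat.eqb (g j) r then 1 else 0.

Lemma in_Dk_indicator_mx k d X : in_Dk k d X ->
  exists g, onto_rows k d g /\
    forall r j, (r < k)%nat -> (j < d)%nat -> X r j = indicator_mx g r j.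
Proof.
  intros [H01 [Hcol Hrow]].
  destruct (nat_finite_choice (fun j r => (r < k)%nat /\ X r j <> 0 /\
              forall r', (r' < k)%nat -> r' <> r -> X r' j = 0) d Hcol) as [g Hg].
  assert (HX : forall r j, (r < k)%nat -> (j < d)%nat -> X r j = indicator_mx g r j).
  { intros r j Hr Hj; destruct (Hg j Hj) as (Hgk & Hnz & Hzero); unfold indicator_mx.
    destruct (Nat.eqb_spec (g j) r) as [<- | Hne]; [| apply Hzero; auto].
    destruct (H01 (g j) j Hr Hj); [contradiction | assumption]. }
  exists g; split; [split |]; [intros j Hj; apply Hg, Hj | | exact HX].
  intros r Hr; destruct (Hrow r Hr) as [j [Hj Hnz]]; exists j; split; [exact Hj |].
  rewrite HX in Hnz by assumption; unfold indicator_mx in Hnz.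
  destruct (Nat.eqb_spec (g j) r); [assumption | lra].
Qed.

Lemma indicator_mx_in_Dk k d g : onto_rows k d g -> in_Dk k d (indicator_mx g).
Proof.
  intros [Hgk Honto]; unfold indicator_mx; split; [| split].
  - intros r j _ _; destruct (Nat.eqb (g j) r); auto.
  - intros j Hj; exists (g j); rewrite Nat.eqb_refl; repeat split; [apply Hgk, Hj | lra |].
    intros r' _ Hr'; destruct (Nat.eqb_spec (g j) r'); [congruence | reflexivity].
  - intros r Hr; destruct (Honto r Hr) as [j [Hj <-]]; exists j.
    rewrite Nat.eqb_refl; split; [exact Hj | lra].
Qed.

Definition labelled (g : nat -> nat) (p : list R) (d : nat) : list (nat * R) :=
  map (fun j => (g j, nth j p 0)) (seq 0 d).

Lemma map_nth_seq {A} (l : list A) d : map (fun j => nth j l d) (seq 0 (length l)) = l.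
Proof.
  induction l as [|a l IH]; cbn; [reflexivity |]; f_equal.
  rewrite <- seq_shift, map_map; exact IH.
Qed.

Lemma map_snd_labelled g p d : length p = d -> map snd (labelled g p d) = p.
Proof. intros <-; unfold labelled; rewrite map_map; apply map_nth_seq. Qed.

Lemma map_fst_labelled g p d : map fst (labelled g p d) = map g (seq 0 d).
Proof. unfold labelled; rewrite map_map; reflexivity. Qed.

Lemma labels_labelled_perm k d g p : onto_rows k d g ->
  Permutation (labels (labelled g p d)) (seq 0 k).
Proof.
  intros [Hgk Honto]; apply NoDup_Permutation; [apply NoDup_nodup | apply seq_NoDup |].
  intros r; unfold labels; rewrite nodup_In, map_fst_labelled, in_map_iff, in_seq.
  split.
  - intros [j [<- Hj]]; apply in_seq in Hj; specialize (Hgk j ltac:(lia)); lia.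
  - intros Hr; destruct (Honto r ltac:(lia)) as [j [Hj <-]].
    exists j; split; [reflexivity | apply in_seq; lia].
Qed.

Lemma entropy_matvec k d X g p : onto_rows k d g ->
  (forall r j, (r < k)%nat -> (j < d)%nat -> X r j = indicator_mx g r j) ->
  entropy (matvec k d X p) = - lump_xlogx (labelled g p d).
Proof.
  intros Hg HX; unfold entropy, lump_xlogx, matvec; f_equal.
  rewrite (lsum_perm _ _ (Permutation_map _ (labels_labelled_perm k d g p Hg))), map_map.
  unfold lsum; f_equal; apply map_ext_in; intros r Hr; apply in_seq in Hr; f_equal.
  unfold block_sum, labelled; rewrite map_map; unfold lsum; f_equal.
  apply map_ext_in; intros j Hj; apply in_seq in Hj; cbn.
  rewrite HX by lia; unfold indicator_mx; destruct (Nat.eqb (g j) r); lra.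
Qed.

Lemma entropy_cons a l : entropy (a :: l) = - (xlogx a + lsum (map xlogx l)).
Proof. reflexivity. Qed.

Lemma entropy_pi_k k p : (1 <= k <= length p)%nat ->
  entropy (pi_k k p) = - merge_xlogx (k - 1) (rev (sort_desc p)).
Proof.
  intros Hk; unfold pi_k, merge_xlogx; rewrite entropy_cons.
  rewrite skipn_rev, firstn_rev, lsum_rev, map_rev, lsum_rev.
  rewrite <- (Permutation_length (sort_desc_perm p)).
  replace (length p - (k - 1))%nat with (length p - k + 1)%nat by lia; lra.
Qed.

Lemma entropy_pi_k_le_matvec d k p X :
  length p = d -> Forall (Rle 0) p -> (1 <= k <= d)%nat -> in_Dk k d X ->
  entropy (pi_k k p) <= entropy (matvec k d X p).
Proof.
  intros Hlen Hnn Hk HX.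
  destruct (in_Dk_indicator_mx k d X HX) as [g [Hg HXg]].
  rewrite (entropy_matvec k d X g p Hg HXg), entropy_pi_k by lia.
  apply Ropp_le_contravar.
  assert (Hperm : Permutation (labelled g p d) (rev (sort_desc_snd (labelled g p d)))).
  { etransitivity; [apply sort_desc_snd_perm | apply Permutation_rev]. }
  assert (Hsnd : map snd (rev (sort_desc_snd (labelled g p d))) = rev (sort_desc p)).
  { rewrite map_rev, map_snd_sort_desc_snd, map_snd_labelled by exact Hlen.
    reflexivity. }
  rewrite (lump_xlogx_perm _ _ Hperm), <- Hsnd.
  apply lump_xlogx_le_merged; rewrite ?Hsnd.
  - apply (Permutation_Forall (Permutation_rev _)).
    apply (Permutation_Forall (sort_desc_perm p)), Hnn.
  - apply StronglySorted_rev, sort_desc_sorted.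
  - rewrite <- (Permutation_length (labels_perm _ _ Hperm)).
    rewrite (Permutation_length (labels_labelled_perm k d g p Hg)), length_seq; lia.
Qed.

Lemma relabel_exists (Q T : list (nat * R)) :
  NoDup (map fst Q) -> map snd T = map snd Q ->
  exists g : nat -> nat, map (fun a => (g (fst a), snd a)) Q = T.
Proof.
  revert T; induction Q as [|[j x] Q IH]; intros [|[r y] T] HQ HT; try discriminate.
  - exists (fun _ => 0%nat); reflexivity.
  - injection HT as -> HT; inversion HQ as [|? ? Hj HQ']; subst.
    destruct (IH T HQ' HT) as [g Hg].
    exists (fun i => if Nat.eqb i j then r else g i); cbn; rewrite Nat.eqb_refl, <- Hg.
    f_equal; apply map_ext_in; intros [i v] Hi; cbn.
    destruct (Nat.eqb_spec i j) as [-> | _]; [| reflexivity].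
    exfalso; apply Hj, (in_map fst _ _ Hi).
Qed.

Lemma labelling_of_sorted d p T : length p = d -> map snd T = sort_desc p ->
  exists g, Permutation (labelled g p d) T.
Proof.
  intros Hlen HT.
  set (L0 := labelled (fun j => j) p d).
  assert (HQ : Permutation L0 (sort_desc_snd L0)) by apply sort_desc_snd_perm.
  destruct (relabel_exists (sort_desc_snd L0) T) as [g Hg].
  - apply (Permutation_NoDup (Permutation_map fst HQ)).
    unfold L0; rewrite map_fst_labelled, map_id; apply seq_NoDup.
  - unfold L0; rewrite HT, map_snd_sort_desc_snd, map_snd_labelled by exact Hlen.
    reflexivity.
  - exists g; rewrite <- Hg.
    replace (labelled g p d) with (map (fun a => (g (fst a), snd a)) L0)
      by (unfold L0, labelled; rewrite map_map; reflexivity).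
    apply Permutation_map, HQ.
Qed.

Definition lump_top (m : nat) (s : list R) : list (nat * R) :=
  map (pair 0%nat) (firstn m s) ++ combine (seq 1 (length s - m)) (skipn m s).

Lemma map_snd_lump_top m s : map snd (lump_top m s) = s.
Proof.
  unfold lump_top; rewrite map_app, map_map, map_snd_combine
    by (rewrite length_seq, length_skipn; reflexivity).
  rewrite map_id; apply firstn_skipn.
Qed.

Lemma in_labels_lump_top m s r : (1 <= m <= length s)%nat ->
  In r (map fst (lump_top m s)) <-> (r <= length s - m)%nat.
Proof.
  intros Hm; unfold lump_top.
  rewrite map_app, map_map, map_fst_combine, in_app_iff, in_seq
    by (rewrite length_seq, length_skipn; reflexivity).
  cbn; split; [intros [Hr | Hr]; [apply in_map_iff in Hr as [y [<- _]] |]; lia |].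
  intros Hr; destruct r as [|r]; [left | right; lia].
  destruct s as [|y s]; [cbn in Hm; lia |].
  destruct m as [|m]; [lia | left; reflexivity].
Qed.

Lemma lump_xlogx_lump_top m s : (1 <= m <= length s)%nat ->
  lump_xlogx (lump_top m s) = xlogx (lsum (firstn m s)) + lsum (map xlogx (skipn m s)).
Proof.
  intros Hm; unfold lump_top; rewrite lump_xlogx_block_app, lump_xlogx_combine.
  - reflexivity.
  - apply seq_NoDup.
  - rewrite length_seq, length_skipn; reflexivity.
  - intros E; apply (f_equal (@length R)) in E; rewrite firstn_length_le in E; cbn in E; lia.
  - rewrite map_fst_combine, in_seq by (rewrite length_seq, length_skipn; reflexivity); lia.
Qed.

Lemma pi_k_attained d k p : length p = d -> (1 <= k <= d)%nat ->
  exists X, in_Dk k d X /\ entropy (matvec k d X p) = entropy (pi_k k p).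
Proof.
  intros Hlen Hk.
  set (m := (length p - k + 1)%nat); set (s := sort_desc p).
  assert (Hs : length s = d)
    by (rewrite <- Hlen; symmetry; exact (Permutation_length (sort_desc_perm p))).
  destruct (labelling_of_sorted d p (lump_top m s) Hlen (map_snd_lump_top m s)) as [g Hg].
  assert (Hlabels : forall r, In r (map g (seq 0 d)) <-> (r < k)%nat).
  { intros r; rewrite <- (map_fst_labelled g p d).
    transitivity (In r (map fst (lump_top m s))); [| rewrite in_labels_lump_top; lia].
    split; apply Permutation_in; [| apply Permutation_sym]; apply Permutation_map, Hg. }
  assert (Hg_onto : onto_rows k d g).
  { split.
    - intros j Hj; apply Hlabels, in_map, in_seq; lia.
    - intros r Hr; apply Hlabels, in_map_iff in Hr as [j [<- Hj]].
      apply in_seq in Hj; exists j; split; [lia | reflexivity]. }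
  exists (indicator_mx g); split; [apply indicator_mx_in_Dk, Hg_onto |].
  rewrite (entropy_matvec k d _ g p Hg_onto) by reflexivity.
  rewrite (lump_xlogx_perm _ _ Hg), lump_xlogx_lump_top by lia.
  unfold pi_k; rewrite entropy_cons; reflexivity.
Qed.

Theorem mainTheorem4 (d k : nat) (p : list R) :
  in_simplex d p -> (1 <= k)%nat -> (k <= d - 1)%nat ->
  (exists X, in_Dk k d X /\ entropy (matvec k d X p) = entropy (pi_k k p)) /\
  (forall X, in_Dk k d X -> entropy (pi_k k p) <= entropy (matvec k d X p)).
Proof.
  intros [Hlen [Hnn _]] Hk1 Hkd; split.
  - apply pi_k_attained; [exact Hlen | lia].
  - intros X HX; apply (entropy_pi_k_le_matvec d); [exact Hlen | exact Hnn | lia | exact HX].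
Qed.
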